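(* Let $G$ be a real algebraic group and $H,L$ real algebraic subgroups, with complexifications $G_{\mathbb C},H_{\mathbb C},L_{\mathbb C}$. Put $X'_{\mathbb C}=H_{\mathbb C}\backslash G_{\mathbb C}$, $X_{\mathbb C}=G_{\mathbb C}/L_{\mathbb C}$, $$\Xi'=\{\mathcal O'\in X'_{\mathbb C}/L_{\mathbb C}:\mathcal O'(\mathbb R)\ne\emptyset\},\qquad \Xi=\{\mathcal O\in H_{\mathbb C}\backslash X_{\mathbb C}:\mathcal O(\mathbb R)\neq\emptyset\},$$ both regarded as subsets of $H_{\mathbb C}\backslash G_{\mathbb C}/L_{\mathbb C}$. If $H^1(\mathbb R,H_{\mathbb C})=1$, then $\Xi'\subset\Xi$. If moreover $H^1(\mathbb R,L_{\mathbb C})=1$, then $\Xi'=\Xi$.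
   Context: $H^1(\mathbb R,\cdot)$ denotes first Galois cohomology for $\mathrm{Gal}(\mathbb C/\mathbb R)$ acting through the given real structures; $\mathcal O(\mathbb R)$ denotes the set of real points of an orbit. An $L_{\mathbb C}$-orbit $\mathcal O'$ in $X'_{\mathbb C}$ and an $H_{\mathbb C}$-orbit $\mathcal O$ in $X_{\mathbb C}$ are identified with the same element of $H_{\mathbb C}\backslash G_{\mathbb C}/L_{\mathbb C}$ when they come from the same double coset. *)

Set Implicit Arguments.

(* A group G_C together with the antiholomorphic involution sigma defining
   the real structure (Galois action of complex conjugation). *)
Record RealGroup := {
  carrier :> Type;
  mul : carrier -> carrier -> carrier;
  one : carrier;
  inv : carrier -> carrier;
  sigma : carrier -> carrier;
  mulA : forall x y z, mul x (mul y z) = mul (mul x y) z;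
  mul1g : forall x, mul one x = x;
  mulg1 : forall x, mul x one = x;
  mulVg : forall x, mul (inv x) x = one;
  mulgV : forall x, mul x (inv x) = one;
  sigma_mul : forall x y, sigma (mul x y) = mul (sigma x) (sigma y);
  sigma_invol : forall x, sigma (sigma x) = x
}.

Arguments mul {_} _ _.
Arguments one {_}.
Arguments inv {_} _.
Arguments sigma {_} _.

(* A subgroup H_C of G_C defined over R (stable under sigma). *)
Record RealSubgroup (G : RealGroup) := {
  mem :> G -> Prop;
  mem1 : mem one;
  memM : forall x y, mem x -> mem y -> mem (mul x y);
  memV : forall x, mem x -> mem (inv x);
  memS : forall x, mem x -> mem (sigma x)
}.

(* H^1(R, H_C) = 1 : every 1-cocycle h (h * sigma h = 1) is a coboundary
   h = b^{-1} sigma(b) with b in H_C. *)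
Definition H1_trivial (G : RealGroup) (H : RealSubgroup G) : Prop :=
  forall h : G, H h -> mul h (sigma h) = one ->
    exists b : G, H b /\ h = mul (inv b) (sigma b).

Definition in_double_coset (G : RealGroup) (H L : RealSubgroup G) (g x : G) : Prop :=
  exists h l : G, H h /\ L l /\ x = mul h (mul g l).

(* Xi' : the L_C-orbit of H_C g in H_C\G_C has a real point, i.e. some coset
   H_C x (x in H g L) is sigma-fixed: sigma(H x) = H x. *)
Definition Xi' (G : RealGroup) (H L : RealSubgroup G) (g : G) : Prop :=
  exists x : G, in_double_coset H L g x /\
    exists h : G, H h /\ sigma x = mul h x.

(* Xi : the H_C-orbit of g L_C in G_C/L_C has a real point, i.e. some coset
   x L_C (x in H g L) is sigma-fixed: sigma(x L) = x L. *)
Definition Xi (G : RealGroup) (H L : RealSubgroup G) (g : G) : Prop :=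
  exists x : G, in_double_coset H L g x /\
    exists l : G, L l /\ sigma x = mul x l.

(** A real point of the double coset H g L (a sigma-fixed element) lies over
    a real point of both orbit spaces, so Xi and Xi' both contain every double
    coset having one. Conversely, a real point H x of H\G gives sigma x = h x,
    and sigma h is then a 1-cocycle of H; if it is a coboundary b^-1 sigma(b),
    the translate b x is sigma-fixed. The same argument on the right, with a
    cocycle of L, turns a real point x L of G/L into a sigma-fixed element. *)


Section GroupFacts.
Variable G : RealGroup.

Lemma mulgI (a x y : G) : mul a x = mul a y -> x = y.
Proof.
  intro E.
  rewrite <- (mul1g G x), <- (mul1g G y), <- (mulVg G a), <- !mulA, E.
  reflexivity.
Qed.

Lemma mulIg (a x y : G) : mul x a = mul y a -> x = y.
Proof.
  intro E.
  rewrite <- (mulg1 G x), <- (mulg1 G y), <- (mulgV G a), !mulA, E.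
  reflexivity.
Qed.

Lemma sigma1 : sigma (one : G) = one.
Proof.
  apply (mulgI (sigma one)). rewrite <- sigma_mul, !mulg1. reflexivity.
Qed.

Lemma sigmaV (a : G) : sigma (inv a) = inv (sigma a).
Proof.
  apply (mulgI (sigma a)). rewrite <- sigma_mul, !mulgV, sigma1. reflexivity.
Qed.

End GroupFacts.

Arguments mulgI {G}.
Arguments mulIg {G}.

Section DoubleCosets.
Variables (G : RealGroup) (H L : RealSubgroup G).

Definition has_real_point (g : G) : Prop :=
  exists x : G, in_double_coset H L g x /\ sigma x = x.

Lemma in_double_cosetMl (g x h : G) :
  H h -> in_double_coset H L g x -> in_double_coset H L g (mul h x).
Proof.
  intros Hh [h0 [l0 [Hh0 [Ll0 ->]]]].
  exists (mul h h0), l0. repeat split; [apply memM; assumption | assumption |].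
  rewrite !mulA. reflexivity.
Qed.

Lemma in_double_cosetMr (g x l : G) :
  L l -> in_double_coset H L g x -> in_double_coset H L g (mul x l).
Proof.
  intros Ll [h0 [l0 [Hh0 [Ll0 ->]]]].
  exists h0, (mul l0 l). repeat split; [assumption | apply memM; assumption |].
  rewrite !mulA. reflexivity.
Qed.

Lemma Xi'_of_real_point (g : G) : has_real_point g -> Xi' H L g.
Proof.
  intros [x [Dx Fx]]. exists x. split; [exact Dx |].
  exists one. split; [apply mem1 | rewrite mul1g; exact Fx].
Qed.

Lemma Xi_of_real_point (g : G) : has_real_point g -> Xi H L g.
Proof.
  intros [x [Dx Fx]]. exists x. split; [exact Dx |].
  exists one. split; [apply mem1 | rewrite mulg1; exact Fx].
Qed.

Lemma real_point_of_Xi' (g : G) : H1_trivial H -> Xi' H L g -> has_real_point g.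
Proof.
  intros H1H [x [Dx [h [Hh Ex]]]].
  assert (cocycle : mul (sigma h) (sigma (sigma h)) = one).
  { rewrite sigma_invol. apply (mulIg x).
    rewrite <- mulA, <- Ex, <- sigma_mul, <- Ex, sigma_invol, mul1g.
    reflexivity. }
  destruct (H1H (sigma h) (memS H h Hh) cocycle) as [b [Hb Eb]].
  assert (Eh : h = mul (inv (sigma b)) b).
  { rewrite <- (sigma_invol G h), Eb, sigma_mul, sigma_invol, sigmaV.
    reflexivity. }
  exists (mul b x). split; [apply in_double_cosetMl; assumption |].
  rewrite sigma_mul, Ex, Eh, !mulA, mulgV, mul1g. reflexivity.
Qed.

Lemma real_point_of_Xi (g : G) : H1_trivial L -> Xi H L g -> has_real_point g.
Proof.
  intros H1L [x [Dx [l [Ll Ex]]]].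
  assert (cocycle : mul l (sigma l) = one).
  { apply (mulgI x).
    rewrite mulA, <- Ex, <- sigma_mul, <- Ex, sigma_invol, mulg1.
    reflexivity. }
  destruct (H1L l Ll cocycle) as [c [Lc Ec]].
  exists (mul x (inv c)). split; [apply in_double_cosetMr; [apply memV |]; assumption |].
  rewrite sigma_mul, Ex, Ec, sigmaV, <- !mulA, mulgV, mulg1. reflexivity.
Qed.

End DoubleCosets.

Theorem lemmaB2 (G : RealGroup) (H L : RealSubgroup G) :
  H1_trivial H ->
  (forall g : G, Xi' H L g -> Xi H L g) /\
  (H1_trivial L -> forall g : G, Xi' H L g <-> Xi H L g).
Proof.
  intros H1H.
  assert (Xi'_sub_Xi : forall g : G, Xi' H L g -> Xi H L g).
  { intros g X'g. apply Xi_of_real_point, real_point_of_Xi'; assumption. }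
  split; [exact Xi'_sub_Xi |].
  intros H1L g. split; [apply Xi'_sub_Xi |].
  intros Xg. apply Xi'_of_real_point, real_point_of_Xi; assumption.
Qed.
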